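(* Let $a,b$ be integers with $0<a<b$. Let $\Gamma_{a,b}=\{\gamma_1,\gamma_2,\gamma_3,\dots\}$ be the sequence produced by the greedy algorithm: $\gamma_1=a$, $\gamma_2=b$, and for $r\ge 3$, $\gamma_r$ is the smallest integer greater than $\gamma_{r-1}$ such that $\{\gamma_1,\dots,\gamma_r\}$ is dissociated. Then there is an integer $n_0=n_0(a,b)$ such that $\gamma_n = 2\gamma_{n-1}$ for all $n\ge n_0$.
   Context: A set $\mathcal S\subseteq\mathbb N$ is dissociated if all of its finite subsets have different sums; equivalently, any equality $\sum_{s\in\mathcal S}\varepsilon_s s=0$ with $\varepsilon_s\in\{-1,0,1\}$ and only finitely many $\varepsilon_s\neq 0$ forces all $\varepsilon_s=0$. *)

From mathcomp Require Import all_boot all_order all_algebra.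
Set Implicit Arguments. Unset Strict Implicit. Unset Printing Implicit Defensive.
Import GRing.Theory Num.Theory.
Local Open Scope ring_scope.

Definition dissociated_prefix (g : nat -> nat) (r : nat) : Prop :=
  forall eps : nat -> int,
    (forall i, (i < r)%N -> eps i \in [:: -1; 0; 1]) ->
    \sum_(i < r) eps i * (g i)%:Z = 0 ->
    forall i, (i < r)%N -> eps i = 0.

(* The greedy sequence Gamma_{a,b}, 0-indexed: g 0 = gamma_1 = a,
   g 1 = gamma_2 = b, and for r >= 2, g r is the smallest integer greater than
   g (r-1) such that {g 0, ..., g r} is dissociated. *)
Definition greedy_seq (a b : nat) (g : nat -> nat) : Prop :=
  g 0%N = a /\ g 1%N = b /\
  forall r : nat, (2 <= r)%N ->
    [/\ (g r.-1 < g r)%N,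
        dissociated_prefix g r.+1 &
        forall m : nat, (g r.-1 < m < g r)%N ->
          ~ dissociated_prefix (fun i => if i == r then m else g i) r.+1].

(* Write D_r for the set of signed sums sum_{i<r} eps_i g_i with eps_i in {-1,0,1}.
   Greediness says that g_r is not in D_r while every integer strictly between
   g_{r-1} and g_r is; in particular g_r <= g_0 + ... + g_{r-1} + 1.  A positive
   x < g_{r+1} missing from D_{r+1} satisfies x < g_r, and both x and g_r - x are
   missing from D_r; iterating, both are below g_2.  So once g_r >= 2 g_2, every
   positive integer below g_n lies in D_n for all n > r.  This forces
   g_{n+1} >= 2 g_n (otherwise g_{n+1} - g_n in D_n would put g_{n+1} in D_{n+1}),
   so the natural number g_0 + ... + g_{n-1} + 1 - g_n is eventually nonincreasing,
   hence eventually constant, which says exactly g_{n+1} = 2 g_n. *)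

From mathcomp Require Import all_boot all_order all_algebra zify.
From Stdlib Require Import Classical.
Set Implicit Arguments. Unset Strict Implicit. Unset Printing Implicit Defensive.
Import Order.TTheory GRing.Theory Num.Theory.
Local Open Scope ring_scope.

Definition signed_sum (g : nat -> nat) (r : nat) (x : int) : Prop :=
  exists2 eps : nat -> int, (forall i, (i < r)%N -> eps i \in [:: -1; 0; 1]) &
    x = \sum_(i < r) eps i * (g i)%:Z.

Lemma eq_signed_sum (g h : nat -> nat) r x :
  (forall i, (i < r)%N -> g i = h i) -> signed_sum g r x <-> signed_sum h r x.
Proof.
by move=> gh; split=> -[eps eps_sign ->]; exists eps => //;
  apply: eq_bigr => i _; rewrite gh.
Qed.

Lemma eq_dissociated_prefix (g h : nat -> nat) r :
  (forall i, (i < r)%N -> g i = h i) ->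
  dissociated_prefix g r <-> dissociated_prefix h r.
Proof.
move=> gh; have sumE eps : \sum_(i < r) eps i * (g i)%:Z = \sum_(i < r) eps i * (h i)%:Z.
  by apply: eq_bigr => i _; rewrite gh.
by split=> dis eps eps_sign; [rewrite -sumE | rewrite sumE]; apply: dis.
Qed.

Lemma sign_opp (e : int) : e \in [:: -1; 0; 1] -> - e \in [:: -1; 0; 1].
Proof. by rewrite !inE; case/or3P => /eqP ->. Qed.

Section SignedSums.
Variable g : nat -> nat.

Lemma sum_extend r (eps : nat -> int) (e : int) :
  \sum_(i < r.+1) (if (i < r)%N then eps i else e) * (g i)%:Z =
  \sum_(i < r) eps i * (g i)%:Z + e * (g r)%:Z.
Proof.
rewrite big_ord_recr /= ltnn; congr (_ + _).
by apply: eq_bigr => i _; rewrite ltn_ord.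
Qed.

Lemma signed_sum0 r : signed_sum g r 0.
Proof. by exists (fun=> 0) => //; rewrite big1 // => i _; rewrite mul0r. Qed.

Lemma signed_sumN r x : signed_sum g r x -> signed_sum g r (- x).
Proof.
move=> [eps eps_sign ->]; exists (fun i => - eps i).
  by move=> i /eps_sign /sign_opp.
by rewrite -sumrN; apply: eq_bigr => i _; rewrite mulNr.
Qed.

Lemma signed_sum_extend r x e : signed_sum g r x -> e \in [:: -1; 0; 1] ->
  signed_sum g r.+1 (x + e * (g r)%:Z).
Proof.
move=> [eps eps_sign ->] e_sign; rewrite -sum_extend.
by exists (fun i => if (i < r)%N then eps i else e) => // i _; case: ifP => // /eps_sign.
Qed.

Lemma signed_sumS r x : signed_sum g r x -> signed_sum g r.+1 x.
Proof. by move=> /(signed_sum_extend (e := 0)); rewrite mul0r addr0; apply. Qed.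

Lemma signed_sumDg r x : signed_sum g r x -> signed_sum g r.+1 (x + (g r)%:Z).
Proof. by move=> /(signed_sum_extend (e := 1)); rewrite mul1r; apply. Qed.

Lemma signed_sum_norm r x : signed_sum g r x -> `|x| <= (\sum_(i < r) g i)%N%:Z.
Proof.
move=> [eps eps_sign ->]; rewrite -natz natr_sum.
apply: (le_trans (ler_norm_sum _ _ _)); apply: ler_sum => i _.
rewrite normrM natz; move: (eps_sign i (ltn_ord i)); rewrite !inE.
by case/or3P => /eqP ->; rewrite ?normr0 ?mul0r ?normrN1 ?normr1 ?mul1r.
Qed.

Lemma dissociated_prefixS r :
  dissociated_prefix g r.+1 <-> dissociated_prefix g r /\ ~ signed_sum g r (g r)%:Z.
Proof.
pose ext (eps : nat -> int) (e : int) i := if (i < r)%N then eps i else e.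
have ext_sign (eps : nat -> int) (e : int) :
    (forall i, (i < r)%N -> eps i \in [:: -1; 0; 1]) -> e \in [:: -1; 0; 1] ->
  forall i, (i < r.+1)%N -> ext eps e i \in [:: -1; 0; 1].
  by move=> eps_sign e_sign i _; rewrite /ext; case: ifP => // /eps_sign.
split=> [dis | [dis not_sum] eps eps_sign].
  split=> [eps eps_sign sum0 i ltir | [eps eps_sign sum_gr]].
    have := dis (ext eps 0) (ext_sign _ 0 eps_sign isT).
    rewrite sum_extend sum0 mul0r addr0 => /(_ erefl i (ltnW ltir)).
    by rewrite /ext ltir.
  have := dis (ext eps (-1)) (ext_sign _ (-1) eps_sign isT).
  rewrite sum_extend -sum_gr mulN1r subrr => /(_ erefl r (ltnSn r)).
  by rewrite /ext ltnn.
have eps_sign' i : (i < r)%N -> eps i \in [:: -1; 0; 1] by move/ltnW/eps_sign.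
rewrite big_ord_recr /= => /eqP; rewrite addr_eq0 => /eqP sum_eq.
have := eps_sign r (ltnSn r); rewrite !inE => /or3P[] /eqP epsr.
- by case: not_sum; exists eps => //; rewrite sum_eq epsr mulN1r opprK.
- move: sum_eq; rewrite epsr mul0r oppr0 => /(dis _ eps_sign') eps0 i.
  by rewrite ltnS leq_eqVlt => /predU1P[-> // | /eps0].
- case: not_sum; rewrite -[(g r)%:Z]opprK; apply: signed_sumN.
  by exists eps => //; rewrite sum_eq epsr mul1r.
Qed.

End SignedSums.

Definition covered (g : nat -> nat) (n : nat) : Prop :=
  forall x : nat, (0 < x < g n)%N -> signed_sum g n x%:Z.

Section Greedy.
Variables (a b : nat) (g : nat -> nat).
Hypothesis g_greedy : greedy_seq a b g.

Lemma greedy_dissociated r : (2 <= r)%N -> dissociated_prefix g r.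
Proof.
by move=> r2; have [_ [_ /(_ r r2) [_ /dissociated_prefixS[]]]] := g_greedy.
Qed.

Lemma greedy_not_signed_sum r : (2 <= r)%N -> ~ signed_sum g r (g r)%:Z.
Proof.
by move=> r2; have [_ [_ /(_ r r2) [_ /dissociated_prefixS[]]]] := g_greedy.
Qed.

Lemma greedy_gap r m : (2 <= r)%N -> (g r.-1 < m < g r)%N -> signed_sum g r m%:Z.
Proof.
move=> r2 gap; apply: NNPP => not_sum.
have [_ [_ /(_ r r2) [_ _ /(_ m gap)]]] := g_greedy; apply.
have agree i : (i < r)%N -> g i = (if i == r then m else g i) by move/ltn_eqF ->.
apply/dissociated_prefixS; rewrite eqxx; split.
  exact/(eq_dissociated_prefix agree)/greedy_dissociated.
by move/(eq_signed_sum _ agree).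
Qed.

Lemma greedy_le_sum r : (2 <= r)%N -> (g r <= \sum_(i < r) g i + 1)%N.
Proof.
move=> r2; rewrite leqNgt; apply/negP => sum_lt.
have last_le : (g r.-1 <= \sum_(i < r) g i)%N.
  by case: r r2 {sum_lt} => // r _; rewrite big_ord_recr leq_addl.
have gap : (g r.-1 < \sum_(i < r) g i + 1 < g r)%N by rewrite sum_lt addn1 ltnS last_le.
have /signed_sum_norm := greedy_gap r2 gap.
by rewrite PoszD gtr0_norm //; lia.
Qed.

Lemma missing_step r x : (2 <= r)%N -> (0 < x < g r.+1)%N ->
    ~ signed_sum g r.+1 x%:Z ->
  [/\ (x < g r)%N, ~ signed_sum g r x%:Z & ~ signed_sum g r (g r - x)%N%:Z].
Proof.
move=> r2 /andP[x0 x_lt] not_sum.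
have x_lt_gr : (x < g r)%N.
  rewrite ltnNge leq_eqVlt; apply/negP => /orP[/eqP gr_x | gr_lt].
    by apply: not_sum; rewrite -gr_x -[_%:Z]add0r; exact/signed_sumDg/signed_sum0.
  by apply/not_sum/greedy_gap; [exact: leqW | rewrite /= gr_lt].
split=> // [/signed_sumS // | /signed_sumN/signed_sumDg].
by have -> : - (g r - x)%N%:Z + (g r)%:Z = x%:Z by lia.
Qed.

Lemma missing_lt_g2 r x : (2 <= r)%N -> (0 < x < g r)%N ->
  ~ signed_sum g r x%:Z -> (x < g 2)%N.
Proof.
elim: r => // r IH r2 x_range not_sum.
have [r1 | r2'] := leqP r 1.
  have r_eq : r = 1%N by lia.
  by move: x_range; rewrite r_eq => /andP[].
have [x_lt not_sum' _] := missing_step r2' x_range not_sum.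
by apply: IH not_sum' => //; case/andP: x_range => -> _.
Qed.

Lemma covered_of_large r : (2 <= r)%N -> (2 * g 2 <= g r)%N -> covered g r.+1.
Proof.
move=> r2 large x x_range; apply: NNPP => not_sum.
have [x_lt not_x not_diff] := missing_step r2 x_range not_sum.
have x0 : (0 < x)%N by case/andP: x_range.
have := missing_lt_g2 r2 _ not_x; have := missing_lt_g2 r2 _ not_diff.
rewrite x0 x_lt; lia.
Qed.

Lemma coveredS n : (2 <= n)%N -> covered g n -> covered g n.+1.
Proof.
move=> n2 cov x x_range; apply: NNPP => not_sum.
have [x_lt not_x _] := missing_step n2 x_range not_sum.
by apply/not_x/cov; rewrite x_lt andbT; case/andP: x_range.
Qed.

Lemma covered_double n : (2 <= n)%N -> covered g n -> (2 * g n <= g n.+1)%N.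
Proof.
move=> n2 cov; rewrite leqNgt; apply/negP => small.
have [_ [_ /(_ n.+1 (leqW n2)) [/= lt_next _ _]]] := g_greedy.
apply: (greedy_not_signed_sum (leqW n2)).
have /cov/signed_sumDg : (0 < g n.+1 - g n < g n)%N by lia.
by have -> : (g n.+1 - g n)%N%:Z + (g n)%:Z = (g n.+1)%:Z by lia.
Qed.

Lemma greedy_eventually_covered : (a < b)%N ->
  exists2 N, (2 <= N)%N & forall n, (N <= n)%N -> covered g n.
Proof.
move=> ab; have [g0 [g1 step]] := g_greedy.
have id_le_g n : (n <= g n)%N.
  elim: n => // n IH; apply: leq_ltn_trans IH _.
  by case: n => [|n]; [rewrite g0 g1 | have [] := step n.+2 isT].
pose r := (2 * g 2).+2.
exists r.+1 => // n rn; rewrite -(subnKC rn).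
elim: (n - r.+1)%N => [|k IH]; last by rewrite addnS; apply: coveredS => //; lia.
by rewrite addn0; apply: covered_of_large (leq_trans _ (id_le_g r)); rewrite // /r !leqW.
Qed.

End Greedy.

Lemma nonincreasing_eventually_constant (u : nat -> nat) N :
    (forall n, (N <= n)%N -> (u n.+1 <= u n)%N) ->
  exists2 M, (N <= M)%N & forall n, (M <= n)%N -> u n = u M.
Proof.
move=> u_dec.
have u_le m n : (N <= m <= n)%N -> (u n <= u m)%N.
  case/andP=> Nm /subnKC <-; elim: (n - m)%N => [|k IH]; first by rewrite addn0.
  by rewrite addnS; apply: leq_trans (u_dec _ _) IH; lia.
suff: forall k M, (N <= M)%N -> (u M <= k)%N ->
    exists2 M', (N <= M')%N & forall n, (M' <= n)%N -> u n = u M'.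
  by apply.
elim=> [|k IH] M NM uM.
  by exists M => // n Mn; have := u_le M n; lia.
case: (classic (exists2 n, (M <= n)%N & u n != u M)) => [[n Mn ne] | const].
  by apply: (IH n); [lia | have := u_le M n; lia].
by exists M => // n Mn; apply/eqP/contraT => ne; case: const; exists n.
Qed.

Lemma eventually_doubling (f : nat -> nat) N :
    (forall n, (N <= n)%N -> (2 * f n <= f n.+1 <= \sum_(i < n.+1) f i + 1)%N) ->
  exists n0, forall n, (n0 <= n)%N -> f n.+1 = (2 * f n)%N.
Proof.
move=> bounds.
pose u n := (\sum_(i < n) f i + 1 - f n)%N.
have sumS n : (\sum_(i < n.+1) f i = \sum_(i < n) f i + f n)%N by rewrite big_ord_recr.
have bounds2 n : (N < n)%N ->
    [/\ (2 * f n <= f n.+1)%N, (f n.+1 <= \sum_(i < n) f i + f n + 1)%N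
      & (f n <= \sum_(i < n) f i + 1)%N].
  case: n => // n Nn; have := bounds n.+1 (ltnW Nn); have := bounds n Nn.
  by rewrite !sumS => /andP[? ?] /andP[? ?]; split.
have [M NM u_const] : exists2 M, (N.+1 <= M)%N & forall n, (M <= n)%N -> u n = u M.
  apply: nonincreasing_eventually_constant => n Nn.
  by have [] := bounds2 n Nn; rewrite /u sumS; lia.
exists M => n Mn; have := u_const n.+1 (leqW Mn); have := u_const n Mn.
by have [] := bounds2 n (leq_trans NM Mn); rewrite /u sumS; lia.
Qed.

Theorem theorem3 (a b : nat) (g : nat -> nat) :
  (0 < a)%N -> (a < b)%N -> greedy_seq a b g ->
  exists n0 : nat, forall n : nat, (n0 <= n)%N -> g n = (2 * g n.-1)%N.
Proof.
move=> _ ab greedy.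
have [N N2 cov] := greedy_eventually_covered greedy ab.
have [n0 doubling] : exists n0, forall n, (n0 <= n)%N -> g n.+1 = (2 * g n)%N.
  apply: (@eventually_doubling g N) => n Nn.
  have n2 : (2 <= n)%N by exact: leq_trans Nn.
  by rewrite (covered_double greedy n2 (cov n Nn)) (greedy_le_sum greedy (leqW n2)).
by exists n0.+1 => -[|n] // n0n; exact: doubling.
Qed.
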